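(* Let $p$ be a prime, $m,t\ge 1$, $B=\mathrm{GF}(p^m)$ and $F=\mathrm{GF}(p^{mt})$, and assume that $t$ is divisible by $p$ (the characteristic of $F$). Let $n=|F|=|B|^t$, $k=n(1-1/|B|)$, and let $\mathcal{C}=\mathrm{RS}(F,k)=\{(f(\alpha))_{\alpha\in F} : f\in F[x],\ \deg f<k\}$, where the symbol $f(\alpha)$ is stored at the node indexed by $\alpha$. Then for any two distinct $\alpha^*,\overline{\alpha}\in F$ whose symbols are erased, there is a distributed repair scheme (Distributed Repair Scheme II) with total repair bandwidth $2(n-1)$ sub-symbols (elements of $B$): each of the two replacement nodes (for $f(\alpha^* )$ and for $f(\overline{\alpha})$) downloads one sub-symbol from each of the $n-2$ surviving nodes (computed from that node's stored symbol) and one sub-symbol from the other replacement node (computed from the data that replacement node has downloaded from the surviving nodes), and from these $n-1$ sub-symbols recovers its erased symbol.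
   Context: Elements of $F$ are called symbols and elements of $B$ sub-symbols. The trace is $\mathrm{Tr}_{F/B}(x)=\sum_{i=0}^{t-1}x^{|B|^i}$. In distributed repair, each erased symbol is reconstructed at its own replacement node; the replacement nodes download data from the surviving nodes and may also exchange data among themselves. The repair bandwidth is the total number of sub-symbols downloaded by all replacement nodes. *)

From mathcomp Require Import all_boot all_order all_algebra.
Set Implicit Arguments. Unset Strict Implicit. Unset Printing Implicit Defensive.
Import GRing.Theory.
Local Open Scope ring_scope.

(* The subfield B = GF(p^m) of a finite field F with |F| = p^(m t):
   the set of x in F with x^(p^m) = x. Sub-symbols are the elements of F
   lying in B. *)
Definition subfieldB (F : finFieldType) (p m : nat) : pred F :=
  fun x => x ^+ (p ^ m) == x.

(* The Reed-Solomon code RS(F,k): codewords (f(alpha))_{alpha in F},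
   deg f < k, i.e. size f <= k. *)
Definition RS_poly (F : finFieldType) (k : nat) (f : {poly F}) : bool :=
  (size f <= k)%N.

(* Downloaded data of a replacement node: a vector indexed by the nodes;
   only the surviving nodes (alpha <> a1, a2) contribute, the erased
   positions are filled with 0 (they carry no information). *)
Definition downloads (F : finFieldType) (a1 a2 : F) (g : F -> F -> F)
  (f : {poly F}) : F -> F :=
  fun alpha => if (alpha == a1) || (alpha == a2) then 0 else g alpha f.[alpha].

(* A distributed repair scheme of the shape of "Distributed Repair Scheme II"
   for the two erased nodes a1 <> a2 of RS(F,k) over the sub-symbol field B:
   - replacement node j downloads from each surviving node alpha the
     sub-symbol g_j alpha (f(alpha)) in B (one sub-symbol per surviving node);
   - replacement node j sends to the other replacement node one sub-symbol
     h_j (its downloads) in B;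
   - replacement node j recovers its erased symbol by r_j from its own
     downloads and the sub-symbol received from the other replacement node.
   Total bandwidth: 2 ((n - 2) + 1) = 2 (n - 1) sub-symbols. *)
Definition dist_repair_scheme_II (F : finFieldType) (B : pred F) (k : nat)
  (a1 a2 : F) : Prop :=
  exists (g1 g2 : F -> F -> F) (h1 h2 : (F -> F) -> F)
         (r1 r2 : (F -> F) -> F -> F),
    [/\ (forall alpha c, B (g1 alpha c) /\ B (g2 alpha c)),
        (forall d, B (h1 d) /\ B (h2 d)) &
        (forall f : {poly F}, RS_poly k f ->
           r1 (downloads a1 a2 g1 f) (h2 (downloads a1 a2 g2 f)) = f.[a1] /\
           r2 (downloads a1 a2 g2 f) (h1 (downloads a1 a2 g1 f)) = f.[a2])].

From HB Require Import structures.
From mathcomp Require Import all_boot all_order all_algebra all_fingroup.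
From mathcomp Require Import all_solvable all_field zify.
Set Implicit Arguments. Unset Strict Implicit. Unset Printing Implicit Defensive.
Import GRing.Theory FinRing.Theory.
Local Open Scope ring_scope.

(* Let F = GF(q^t) with q a power of the characteristic and B = GF(q). The
   trace Tr x = \sum_(i < t) x^(q^i) is B-linear with values in B and
   nondegenerate, so z is determined by the sub-symbols Tr (u z), u in F.
   For deg f < n - n/q the polynomial f(X) Tr(u(X - x))/(X - x) has degree
   < n - 1, hence sums to zero over F.  This gives the Guruswami-Wootters
   identity
     Tr (u f(x)) = - \sum_(a != x) Tr (u (a - x)) Tr (f(a) / (a - x)),
   in which node a contributes the single sub-symbol Tr (f(a) / (a - x)).
   With two erasures x, y, node x misses the term a = y, and node y sends
   it: Tr (f(y) / (y - x)) is given by the identity at y with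
   u = 1/(y - x), where the coefficient of the unknown term a = x is
   Tr (-1) = -t = 0 because the characteristic divides t. *)

Section FiniteFieldSums.
Variable F : finFieldType.

Lemma natr_card_finField : #|F|%:R = 0 :> F.
Proof. by rewrite -zmodXgE -cardsT expg_cardG ?inE. Qed.

Lemma exists_nonroot (P : {poly F}) :
  P != 0 -> (size P <= #|F|)%N -> exists x, ~~ root P x.
Proof.
move=> P_neq0 sizeP; apply/existsP; rewrite -negb_forall; apply: contraTN sizeP.
move=> /forallP rootsP; rewrite -ltnNge cardE.
apply: max_poly_roots; rewrite ?enum_uniq //.
by apply/allP=> x _; apply: rootsP.
Qed.

Lemma sum_expr_finField d : (d < #|F|.-1)%N -> \sum_(x : F) x ^+ d = 0.
Proof.
case: d => [_ | d ltdF].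
  by under eq_bigr do rewrite expr0; rewrite sumr_const natr_card_finField.
have [c] : exists c : F, ~~ root ('X^(d.+2) - 'X) c.
  have sizeP : size ('X^(d.+2) - 'X : {poly F}) = d.+3.
    by rewrite size_polyDl ?size_polyXn ?size_polyN ?size_polyX.
  by apply: exists_nonroot; rewrite -?size_poly_eq0 sizeP // -ltn_predRL.
rewrite rootE !hornerE subr_eq0 exprS => cdc.
have c_neq0 : c != 0 by apply: contraNneq cdc => ->; rewrite mul0r.
have cd1 : c ^+ d.+1 != 1 by apply: contraNneq cdc => ->; rewrite mulr1.
set S := \sum_x _; have : S = c ^+ d.+1 * S.
  rewrite {1}/S (reindex_inj (mulfI c_neq0)) /= mulr_sumr.
  by apply: eq_bigr => x _; rewrite exprMn.
move/eqP; rewrite -subr_eq0 -{1}(mul1r S) -mulrBl mulf_eq0 subr_eq0 eq_sym.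
by rewrite (negbTE cd1) => /eqP.
Qed.

Lemma sum_horner_finField (P : {poly F}) : (size P < #|F|)%N -> \sum_x P.[x] = 0.
Proof.
move=> sizeP; under eq_bigr do rewrite horner_coef.
rewrite exchange_big big1 // => i _.
rewrite -mulr_sumr sum_expr_finField ?mulr0 //.
by have := ltn_ord i; lia.
Qed.

End FiniteFieldSums.

Section TraceRepair.
Variables (F : finFieldType) (q t : nat).
Hypotheses (q_pchar : [pchar F].-nat q) (cardF : #|F| = (q ^ t)%N).

Lemma q_gt1 : (1 < q)%N.
Proof.
have := finNzRing_gt1 F; rewrite cardF.
case: q => [|[|q']] //; rewrite ?exp1n //.
by case: (t) => [|n]; rewrite ?expn0 ?exp0n.
Qed.

Lemma t_gt0 : (0 < t)%N.
Proof. by have := finNzRing_gt1 F; rewrite cardF; case: (t). Qed.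

Lemma exprD_qpow i (x y : F) : (x + y) ^+ (q ^ i) = x ^+ (q ^ i) + y ^+ (q ^ i).
Proof. by apply: exprDn_pchar; rewrite pnatX q_pchar. Qed.

Lemma expr0_qpow i : (0 : F) ^+ (q ^ i) = 0.
Proof. by rewrite expr0n expn_eq0 (negbTE (lt0n_neq0 (ltnW q_gt1))). Qed.

Definition trace (y : F) : F := \sum_(i < t) y ^+ (q ^ i).

Lemma trace_is_zmod_morphism : zmod_morphism trace.
Proof.
move=> x y; rewrite /trace -sumrB; apply: eq_bigr => i _.
by apply/eqP; rewrite eq_sym subr_eq -exprD_qpow subrK.
Qed.

HB.instance Definition _ :=
  GRing.isZmodMorphism.Build F F trace trace_is_zmod_morphism.

Lemma trace0 : trace 0 = 0. Proof. exact: raddf0. Qed.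
Lemma traceN z : trace (- z) = - trace z. Proof. exact: raddfN. Qed.
Lemma traceB z z' : trace (z - z') = trace z - trace z'. Proof. exact: raddfB. Qed.
Lemma trace_sum (I : finType) (P : pred I) (G : I -> F) :
  trace (\sum_(i | P i) G i) = \sum_(i | P i) trace (G i).
Proof. exact: raddf_sum. Qed.

Lemma trace_fixed y : trace y ^+ q = trace y.
Proof.
rewrite /trace (big_morph (fun z : F => z ^+ q) (exprD_qpow 1) (expr0_qpow 1)).
have [t' def_t] : exists t', t = t'.+1 by exists t.-1; rewrite prednK ?t_gt0.
move: cardF; rewrite def_t => card_qt.
rewrite big_ord_recr big_ord_recl /= -exprM -expnSr -card_qt expf_card addrC.
by congr (_ + _); apply: eq_bigr => i _; rewrite -exprM -expnSr.
Qed.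

Lemma traceZ (c z : F) : c ^+ q = c -> trace (c * z) = c * trace z.
Proof.
move=> cq; rewrite /trace mulr_sumr; apply: eq_bigr => i _; rewrite exprMn.
by congr (_ * _); elim: (val i) => [|j IHj]; rewrite ?expr1 // expnSr exprM IHj.
Qed.

Lemma trace1 : trace 1 = t%:R.
Proof.
by rewrite /trace (eq_bigr (fun=> 1)) ?sumr_const ?card_ord // => i; rewrite expr1n.
Qed.

Lemma exists_trace_neq0 : exists w, trace w != 0.
Proof.
have [t' def_t] : exists t', t = t'.+1 by exists t.-1; rewrite prednK ?t_gt0.
have sizeT : size (\sum_(i < t) 'X^(q ^ i) : {poly F}) = (q ^ t').+1.
  rewrite def_t big_ord_recr /= addrC size_polyDl size_polyXn //.
  apply: leq_ltn_trans (size_sum _ _ _) _; rewrite ltnS.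
  by apply/bigmax_leqP => i _; rewrite size_polyXn ltn_exp2l ?q_gt1.
have [w w_root] : exists w, ~~ root (\sum_(i < t) 'X^(q ^ i) : {poly F}) w.
  apply: exists_nonroot; first by rewrite -size_poly_eq0 sizeT.
  by rewrite sizeT cardF def_t ltn_exp2l ?q_gt1.
exists w; suff <- : (\sum_(i < t) 'X^(q ^ i) : {poly F}).[w] = trace w by [].
by rewrite horner_sum; apply: eq_bigr => i _; rewrite hornerXn.
Qed.

Lemma trace_inj z z' : (forall u, trace (u * z) = trace (u * z')) -> z = z'.
Proof.
move=> eq_traces; apply/eqP; rewrite -subr_eq0; apply: contraT => z_neq_z'.
have [w] := exists_trace_neq0; rewrite -[w](mulfVK z_neq_z') mulrBr traceB.
by rewrite eq_traces subrr eqxx.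
Qed.

Definition trace_solve (phi : F -> F) : F :=
  odflt 0 [pick z | [forall u, trace (u * z) == phi u]].

Lemma trace_solveP phi z :
  (forall u, trace (u * z) = phi u) -> trace_solve phi = z.
Proof.
move=> phiE; rewrite /trace_solve; case: pickP => [z' /forallP z'E | no_z] /=.
  by apply: trace_inj => u; rewrite phiE; apply/eqP.
by have /forallP[] := negbT (no_z z) => u; rewrite phiE.
Qed.

Definition trace_div_poly (x u : F) : {poly F} :=
  \sum_(i < t) u ^+ (q ^ i) *: ('X - x%:P) ^+ (q ^ i).-1.

Lemma size_trace_div_poly x u : (size (trace_div_poly x u) <= #|F| %/ q)%N.
Proof.
have -> : (#|F| %/ q = q ^ t.-1)%N.
  by rewrite cardF -(prednK t_gt0) expnSr mulnK ?(ltnW q_gt1).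
apply: leq_trans (size_sum _ _ _) _; apply/bigmax_leqP => i _.
apply: leq_trans (size_scale_leq _ _) _.
rewrite size_exp_XsubC prednK ?expn_gt0 ?(ltnW q_gt1) // leq_exp2l ?q_gt1 //.
by rewrite -ltnS prednK ?t_gt0.
Qed.

Lemma horner_trace_div_poly_self x u : (trace_div_poly x u).[x] = u.
Proof.
rewrite horner_sum (bigD1 (Ordinal t_gt0)) //= big1 ?addr0 => [|i i_neq0].
  by rewrite hornerZ horner_exp hornerXsubC expn0 expr1 expr0 mulr1.
have i_gt0 : (0 < i)%N.
  by rewrite lt0n; apply: contraNneq i_neq0 => i_eq0; apply/eqP/val_inj.
have qi_gt1 := ltn_exp2l 0 i q_gt1; rewrite expn0 i_gt0 in qi_gt1.
have : ((q ^ i).-1 != 0)%N by rewrite -lt0n -ltnS prednK // ltnW.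
by rewrite hornerZ horner_exp hornerXsubC subrr expr0n => /negbTE->; rewrite mulr0.
Qed.

Lemma horner_trace_div_poly x u a :
  a != x -> (trace_div_poly x u).[a] = trace (u * (a - x)) / (a - x).
Proof.
rewrite -subr_eq0 => ax_neq0; rewrite horner_sum mulr_suml; apply: eq_bigr => i _.
rewrite hornerZ horner_exp hornerXsubC exprMn -mulrA; congr (_ * _).
have qi_gt0 : (0 < q ^ i)%N by rewrite expn_gt0 ltnW ?q_gt1.
by rewrite -{2}(prednK qi_gt0) exprSr mulfK.
Qed.

Lemma trace_repair (f : {poly F}) x u : (size f <= #|F| - #|F| %/ q)%N ->
  trace (u * f.[x]) =
  - \sum_(a | a != x) trace (u * (a - x)) * trace (f.[a] / (a - x)).
Proof.
move=> size_f; have : \sum_a (f * trace_div_poly x u).[a] = 0.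
  apply: sum_horner_finField; apply: leq_ltn_trans (size_polyMleq _ _) _.
  have := size_trace_div_poly x u; have := leq_div #|F| q.
  have F_gt1 : (1 < #|F|)%N := finNzRing_gt1 F.
  by move: size_f F_gt1; move: (#|F| %/ q)%N => d; lia.
rewrite (bigD1 x) //= hornerM horner_trace_div_poly_self mulrC => /eqP.
rewrite addr_eq0 => /eqP->; rewrite traceN trace_sum; congr (- _).
apply: eq_bigr => a a_neq_x; rewrite hornerM horner_trace_div_poly //.
by rewrite [in LHS]mulrCA [LHS]traceZ ?trace_fixed.
Qed.

Lemma downloadsC (x y : F) g f : downloads x y g f =1 downloads y x g f.
Proof. by move=> a; rewrite /downloads orbC. Qed.

Hypothesis t_eq0 : t%:R = 0 :> F.

Definition download (x a c : F) : F := trace (c / (a - x)).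

(* For B-valued d this is \sum_a Tr ((a - x) / (y - x)) * d a; the outer
   trace keeps the message in B for every d. *)
Definition message (x y : F) (d : F -> F) : F :=
  trace (\sum_a (a - x) / (y - x) * d a).

Definition recover (x y : F) (d : F -> F) (e : F) : F :=
  trace_solve (fun u =>
    - \sum_a trace (u * (a - x)) * d a - trace (u * (y - x)) * e).

Section Downloads.
Variables (x y : F) (f : {poly F}) (D : F -> F).
Hypotheses (x_neq_y : x != y) (size_f : (size f <= #|F| - #|F| %/ q)%N).
Hypothesis DE : D =1 downloads x y (download x) f.

Let D_x : D x = 0. Proof. by rewrite DE /downloads eqxx. Qed.
Let D_y : D y = 0. Proof. by rewrite DE /downloads eqxx orbT. Qed.
Let D_other a : a != x -> a != y -> D a = trace (f.[a] / (a - x)).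
Proof. by move=> ax ay; rewrite DE /downloads (negbTE ax) (negbTE ay). Qed.

Lemma message_correct : message x y D = trace (f.[x] / (x - y)).
Proof.
have D_fixed a : D a ^+ q = D a.
  by rewrite DE /downloads; case: ifP => _; [apply: (expr0_qpow 1) | apply: trace_fixed].
have scaleE a : (x - y)^-1 * (a - x) = - ((a - x) / (y - x)).
  by rewrite -opprB invrN mulNr mulrC.
rewrite /message trace_sum (bigD1 x) //= D_x mulr0 trace0 add0r.
rewrite mulrC trace_repair // -sumrN; apply: eq_bigr => a a_neq_x.
rewrite scaleE traceN mulNr opprK.
have [->|a_neq_y] := eqVneq a y.
  by rewrite D_y mulr0 trace0 mulfV ?trace1 ?t_eq0 ?mul0r // subr_eq0 eq_sym.
by rewrite -D_other // mulrC traceZ // mulrC.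
Qed.

Lemma recover_correct : recover x y D (trace (f.[y] / (y - x))) = f.[x].
Proof.
have y_neq_x : y != x by rewrite eq_sym.
apply: trace_solveP => u.
rewrite (bigD1 x) //= D_x mulr0 add0r (bigD1 y y_neq_x) /= D_y mulr0 add0r.
rewrite trace_repair // (bigD1 y y_neq_x) /= opprD addrC.
by congr (- _ - _); apply: eq_bigr => a /andP[ay ax]; rewrite D_other.
Qed.

End Downloads.

Lemma trace_repair_scheme a1 a2 : a1 != a2 ->
  dist_repair_scheme_II (fun c : F => c ^+ q == c) (#|F| - #|F| %/ q) a1 a2.
Proof.
move=> a1_neq_a2; have a2_neq_a1 : a2 != a1 by rewrite eq_sym.
exists (download a1), (download a2), (message a1 a2), (message a2 a1),
  (recover a1 a2), (recover a2 a1); split=> [a c | d | f size_f].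
1,2: by split; apply/eqP; apply: trace_fixed.
rewrite (message_correct a1_neq_a2 size_f (frefl _)).
rewrite (message_correct a2_neq_a1 size_f (downloadsC _ _ _ _)).
split; apply: recover_correct => //; exact: downloadsC.
Qed.

End TraceRepair.

Theorem theorem3 (p m t : nat) (F : finFieldType) :
  prime p -> (0 < m)%N -> (0 < t)%N -> #|F| = (p ^ (m * t))%N -> (p %| t)%N ->
  let n := #|F| in
  let k := (n - n %/ p ^ m)%N in
  forall a1 a2 : F, a1 != a2 ->
    dist_repair_scheme_II (@subfieldB F p m) k a1 a2.
Proof.
move=> p_prime _ _ cardF p_dvd_t n k a1 a2 a1_neq_a2.
have pcharFp : p \in [pchar F] := card_finPcharP cardF p_prime.
have q_pchar : [pchar F].-nat (p ^ m)%N.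
  by rewrite pnatX (eq_pnat _ (pcharf_eq pcharFp)) pnat_id.
have t_eq0 : t%:R = 0 :> F.
  by rewrite -(divnK p_dvd_t) natrM (pcharf0 pcharFp) mulr0.
rewrite expnM in cardF.
exact: (trace_repair_scheme q_pchar cardF t_eq0 a1_neq_a2).
Qed.
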